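(* Let $0\le k\le n$. There are exactly $k(n-k)+1$ isomorphism classes of matroids of rank $k$ on $n$ elements of the form $\mathsf{U}_{0,m}\oplus\mathsf{U}_{k-\ell,n-\ell-m}\oplus\mathsf{U}_{\ell,\ell}$, and the Tutte polynomials of representatives of these classes are linearly independent in $\mathbb{Z}[x,y]$.
   Context: $\mathsf{U}_{r,m}$ is the uniform matroid of rank $r$ on $m$ elements. *)

From HB Require Import structures.
From mathcomp Require Import all_boot all_order all_algebra.
Set Implicit Arguments. Unset Strict Implicit. Unset Printing Implicit Defensive.
Import Order.TTheory GRing.Theory Num.Theory.

Definition is_matroid (T : finType) (B : {set {set T}}) : bool :=
  (B != set0) &&
  [forall B1 in B, forall B2 in B, forall x in B1 :\: B2,
     exists y in B2 :\: B1, (y |: (B1 :\ x)) \in B].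

Definition mrank (T : finType) (B : {set {set T}}) (A : {set T}) : nat :=
  \max_(X in B) #|A :&: X|.

Definition unif (r m : nat) : {set {set 'I_m}} := [set X : {set 'I_m} | #|X| == r].

Definition dsum (T1 T2 : finType) (B1 : {set {set T1}}) (B2 : {set {set T2}})
  : {set {set (T1 + T2)%type}} :=
  [set ((@inl T1 T2 @: X1) :|: (@inr T1 T2 @: X2)) | X1 : {set T1} in B1, X2 : {set T2} in B2].

(* matroid isomorphism: a bijection of ground sets carrying bases to bases
   (bijective = injective between ground sets of equal size) *)
Definition miso (T1 T2 : finType) (B1 : {set {set T1}}) (B2 : {set {set T2}}) : bool :=
  (#|T1| == #|T2|) &&
  [exists f : {ffun T1 -> T2},
     injectiveb f && [forall X : {set T1}, (X \in B1) == ((f @: X) \in B2)]].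

Definition form_matroid (n k m l : nat) :=
  dsum (dsum (unif 0 m) (unif (k - l) (n - l - m))) (unif l l).

Definition form_ok (n k m l : nat) : bool :=
  [&& l <= k, m + l <= n & k - l <= n - l - m].

Definition form_set (n k : nat) : {set {set {set 'I_n}}} :=
  [set B : {set {set 'I_n}} | is_matroid B &&
     [exists m : 'I_n.+1, exists l : 'I_n.+1,
        form_ok n k m l && miso B (form_matroid n k m l)]].

Definition form_classes (n k : nat) : {set {set {set {set 'I_n}}}} :=
  [set [set B' in form_set n k | miso B B'] | B in form_set n k].

(* Tutte polynomial in Z[x,y] = {poly {poly int}}, x = 'X (outer), y = 'X%:P *)
Definition tutte (T : finType) (B : {set {set T}}) : {poly {poly int}} :=
  (\sum_(A : {set T})
    (('X : {poly {poly int}}) - 1) ^+ (mrank B setT - mrank B A) *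
    (('X%:P : {poly {poly int}}) - 1) ^+ (#|A| - mrank B A))%R.

(* Up to isomorphism, U_{0,m} (+) U_{k-l,n-l-m} (+) U_{l,l} is the matroid on {0, ..., n-1}
   whose bases are the k-sets avoiding the first m points and containing the last l.
   If m = n-k or l = k it is U_{0,n-k} (+) U_{k,k}; the remaining k(n-k) parameter pairs
   have m < n-k and l < k.  Loops and coloops contribute factors y and x, so the Tutte
   polynomial of the pair (m, l) is y^m T(U_{k-l,n-l-m}) x^l.  Its coefficient of
   x^(l+1) y^m is the beta invariant of U_{k-l,n-l-m}, which is positive, while that
   coefficient vanishes for every lexicographically larger pair (for (m, l+1) because a
   uniform matroid without loops or coloops has no constant term).  The Tutte polynomials
   thus form a triangular system: they are linearly independent, in particular pairwise
   distinct, so the k(n-k)+1 forms are pairwise non-isomorphic. *)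

From HB Require Import structures.
From mathcomp Require Import all_boot all_order all_algebra.
From mathcomp Require Import zify.
Import GRing.Theory Num.Theory.

Set Implicit Arguments.
Unset Strict Implicit.
Unset Printing Implicit Defensive.

Section DirectSum.
Variables T1 T2 : finType.

Definition lpart (S : {set T1 + T2}) : {set T1} := inl @^-1: S.
Definition rpart (S : {set T1 + T2}) : {set T2} := inr @^-1: S.
Definition sumset (X1 : {set T1}) (X2 : {set T2}) : {set T1 + T2} :=
  (inl @: X1) :|: (inr @: X2).

Lemma mem_sumset_inl X1 X2 a : (inl a \in sumset X1 X2) = (a \in X1).
Proof.
rewrite inE (mem_imset _ _ (@inl_inj T1 T2)).
by case: imsetP => [[]|] //; rewrite orbF.
Qed.

Lemma mem_sumset_inr X1 X2 b : (inr b \in sumset X1 X2) = (b \in X2).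
Proof.
rewrite inE (mem_imset _ _ (@inr_inj T1 T2)).
by case: imsetP => [[]|].
Qed.

Definition mem_sumset := (mem_sumset_inl, mem_sumset_inr).

Lemma lpart_sumset X1 X2 : lpart (sumset X1 X2) = X1.
Proof. by apply/setP=> a; rewrite inE mem_sumset. Qed.

Lemma rpart_sumset X1 X2 : rpart (sumset X1 X2) = X2.
Proof. by apply/setP=> b; rewrite inE mem_sumset. Qed.

Lemma sumset_parts S : sumset (lpart S) (rpart S) = S.
Proof. by apply/setP=> [[a|b]]; rewrite mem_sumset inE. Qed.

Lemma card_sumset X1 X2 : #|sumset X1 X2| = #|X1| + #|X2|.
Proof.
rewrite cardsU !card_imset; [|exact: inr_inj|exact: inl_inj].
suff /eqP -> : (inl @: X1) :&: (inr @: X2) == set0 by rewrite cards0 subn0.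
by apply/set0Pn=> -[_ /setIP [/imsetP [a _ ->] /imsetP [b _]]].
Qed.

Lemma setI_sumset S X1 X2 :
  S :&: sumset X1 X2 = sumset (lpart S :&: X1) (rpart S :&: X2).
Proof. by apply/setP=> [[a|b]]; rewrite in_setI !mem_sumset in_setI !inE. Qed.

Lemma subset_sumset X1 X2 Y1 Y2 :
  (sumset X1 X2 \subset sumset Y1 Y2) = (X1 \subset Y1) && (X2 \subset Y2).
Proof.
apply/subsetP/andP => [sub | [/subsetP sub1 /subsetP sub2]].
  split; apply/subsetP=> x.
    by move/(_ (inl x)): sub; rewrite !mem_sumset.
  by move/(_ (inr x)): sub; rewrite !mem_sumset.
by move=> [a|b]; rewrite !mem_sumset; [apply: sub1 | apply: sub2].
Qed.

Lemma mem_dsum (B1 : {set {set T1}}) (B2 : {set {set T2}}) S :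
  (S \in dsum B1 B2) = (lpart S \in B1) && (rpart S \in B2).
Proof.
apply/imset2P/andP => [[X1 X2 h1 h2 ->] | [h1 h2]].
  by rewrite -/(sumset X1 X2) lpart_sumset rpart_sumset.
by exists (lpart S) (rpart S); rewrite // -/(sumset _ _) sumset_parts.
Qed.

Lemma dsum_neq0 (B1 : {set {set T1}}) (B2 : {set {set T2}}) :
  B1 != set0 -> B2 != set0 -> dsum B1 B2 != set0.
Proof.
move=> /set0Pn [X1 h1] /set0Pn [X2 h2]; apply/set0Pn; exists (sumset X1 X2).
by rewrite mem_dsum lpart_sumset rpart_sumset h1 h2.
Qed.

End DirectSum.

Lemma can_imset (T1 T2 : finType) (f : T1 -> T2) (g : T2 -> T1) :
  cancel f g -> cancel (fun X : {set T1} => f @: X) (fun Y : {set T2} => g @: Y).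
Proof. by move=> fK X; rewrite -imset_comp (eq_imset _ fK) imset_id. Qed.

Section Isomorphism.
Variables T1 T2 : finType.

Definition miso_by (f : T1 -> T2) (g : T2 -> T1)
    (B1 : {set {set T1}}) (B2 : {set {set T2}}) :=
  [/\ cancel f g, cancel g f & forall X, (X \in B1) = (f @: X \in B2)].

Lemma misoP (B1 : {set {set T1}}) (B2 : {set {set T2}}) :
  reflect (exists f g, miso_by f g B1 B2) (miso B1 B2).
Proof.
apply: (iffP andP) => [[/eqP cardT /existsP [f /andP [/injectiveP f_inj eqB]]]
                     | [f [g [fK gK eqB]]]].
  have [g fK gK] := inj_card_bij f_inj (eq_leq (esym cardT)).
  by exists f, g; split=> // X; apply/eqP/(forallP eqB).
split; first by rewrite (bij_eq_card (Bijective fK gK)).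
apply/existsP; exists [ffun x => f x]; apply/andP; split.
  by apply/injectiveP=> x y; rewrite !ffunE => /(can_inj fK).
by apply/forallP=> X; rewrite eqB (eq_imset _ (ffunE _)).
Qed.

Lemma mrank_imset (f : T1 -> T2) (g : T2 -> T1) B1 B2 (A : {set T1}) :
  miso_by f g B1 B2 -> mrank B2 (f @: A) = mrank B1 A.
Proof.
case=> fK gK eqB; rewrite /mrank (reindex (fun X : {set T1} => f @: X)) /=.
  apply: eq_big => [X | X _]; first by rewrite eqB.
  by rewrite -imsetI ?card_imset //; [apply: can_inj fK | move=> x y _ _ /(can_inj fK)].
by exists (fun Y : {set T2} => g @: Y) => Y _; apply: can_imset.
Qed.

Lemma tutte_miso_by (f : T1 -> T2) (g : T2 -> T1) B1 B2 :
  miso_by f g B1 B2 -> tutte B1 = tutte B2.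
Proof.
move=> isoB; have [fK gK _] := isoB.
rewrite /tutte (reindex (fun A : {set T1} => f @: A)) /=; last first.
  by exists (fun Y : {set T2} => g @: Y) => Y _; apply: can_imset.
have imsetT : f @: setT = setT.
  by apply/setP=> y; rewrite inE -[y]gK imset_f.
apply: eq_bigr => A _.
by rewrite -imsetT !(mrank_imset _ isoB) (card_imset _ (can_inj fK)).
Qed.

End Isomorphism.

Lemma tutte_miso (T1 T2 : finType) (B1 : {set {set T1}}) (B2 : {set {set T2}}) :
  miso B1 B2 -> tutte B1 = tutte B2.
Proof. by case/misoP=> f [g /tutte_miso_by]. Qed.

Lemma miso_refl (T : finType) (B : {set {set T}}) : miso B B.
Proof. by apply/misoP; exists id, id; split=> // X; rewrite imset_id. Qed.

Lemma miso_sym (T1 T2 : finType) (B1 : {set {set T1}}) (B2 : {set {set T2}}) :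
  miso B1 B2 -> miso B2 B1.
Proof.
case/misoP=> f [g [fK gK eqB]]; apply/misoP; exists g, f; split=> // Y.
by rewrite eqB can_imset.
Qed.

Lemma miso_trans (T1 T2 T3 : finType) (B1 : {set {set T1}}) (B2 : {set {set T2}})
    (B3 : {set {set T3}}) :
  miso B1 B2 -> miso B2 B3 -> miso B1 B3.
Proof.
case/misoP=> f [g [fK gK eqB]] /misoP [f' [g' [fK' gK' eqB']]].
apply/misoP; exists (f' \o f), (g \o g'); split; try exact: can_comp.
by move=> X; rewrite eqB eqB' imset_comp.
Qed.

Lemma exists_set_between (T : finType) (L U : {set T}) k :
  L \subset U -> #|L| <= k -> k <= #|U| ->
  exists X : {set T}, [/\ #|X| = k, L \subset X & X \subset U].
Proof.
move=> LU Lk kU.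
have : k - #|L| <= #|U :\: L| by rewrite cardsD (setIidPr LU); lia.
case/card_geqP=> s [s_uniq size_s sU]; set Y := [set x in s].
have YUL : Y \subset U :\: L by apply/subsetP=> x; rewrite inE => /sU.
have cardY : #|Y| = k - #|L| by rewrite cardsE (card_uniqP s_uniq).
exists (L :|: Y); split; rewrite ?subsetUl ?subUset ?LU ?(subset_trans YUL) ?subsetDl //.
suff /eqP LY0 : L :&: Y == set0 by rewrite cardsU LY0 cards0 cardY; lia.
rewrite -subset0; apply/subsetP=> x /setIP [xL /(subsetP YUL)].
by rewrite inE xL.
Qed.

Lemma mrank_le_card (T : finType) (B : {set {set T}}) A : mrank B A <= #|A|.
Proof. by apply/bigmax_leqP=> X _; rewrite subset_leq_card ?subsetIl. Qed.

Lemma mrank_le_setT (T : finType) (B : {set {set T}}) A : mrank B A <= mrank B setT.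
Proof.
apply/bigmax_leqP=> X hX; apply: leq_trans (leq_bigmax_cond _ hX).
by rewrite subset_leq_card ?setSI ?subsetT.
Qed.

Lemma mrank_dsum (T1 T2 : finType) (B1 : {set {set T1}}) (B2 : {set {set T2}}) A :
  B1 != set0 -> B2 != set0 ->
  mrank (dsum B1 B2) A = mrank B1 (lpart A) + mrank B2 (rpart A).
Proof.
rewrite -!card_gt0 /mrank => B1_gt0 B2_gt0.
apply/eqP; rewrite eqn_leq; apply/andP; split.
  apply/bigmax_leqP=> X; rewrite mem_dsum => /andP [h1 h2].
  rewrite -(sumset_parts X) setI_sumset card_sumset.
  by apply: leq_add; apply: leq_bigmax_cond.
have [X1 h1 ->] := eq_bigmax_cond (fun X => #|lpart A :&: X|) B1_gt0.
have [X2 h2 ->] := eq_bigmax_cond (fun X => #|rpart A :&: X|) B2_gt0.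
have hX : sumset X1 X2 \in dsum B1 B2 by rewrite mem_dsum lpart_sumset rpart_sumset h1.
by apply: leq_trans (leq_bigmax_cond _ hX); rewrite setI_sumset card_sumset.
Qed.

Lemma mrank_unif r m (A : {set 'I_m}) : r <= m -> mrank (unif r m) A = minn #|A| r.
Proof.
move=> le_rm; apply/eqP; rewrite eqn_leq; apply/andP; split.
  apply/bigmax_leqP=> X; rewrite inE => /eqP cardX; rewrite leq_min.
  by rewrite !subset_leq_card ?subsetIl // -cardX subset_leq_card ?subsetIr.
have [X cardX AX] : exists2 X : {set 'I_m}, #|X| = r & A :&: X = if r <= #|A| then X else A.
  case: leqP => [le_rA | /ltnW le_Ar].
    have [|X [cardX _ XA]] := exists_set_between (sub0set A) _ le_rA; first by rewrite cards0.
    by exists X; rewrite // (setIidPr XA).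
  have [|X [cardX AX _]] := exists_set_between (subsetT A) le_Ar.
    by rewrite cardsT card_ord.
  by exists X; rewrite // (setIidPl AX).
have hX : X \in unif r m by rewrite inE cardX.
apply: leq_trans (leq_bigmax_cond _ hX); rewrite AX.
by case: (leqP r #|A|) => h; rewrite ?cardX; lia.
Qed.

Section IntervalBases.
Variable T : finType.

Definition interval_bases (k : nat) (L U : {set T}) : {set {set T}} :=
  [set S : {set T} | [&& #|S| == k, L \subset S & S \subset U]].

Lemma interval_bases_matroid k (L U S0 : {set T}) :
  S0 \in interval_bases k L U -> is_matroid (interval_bases k L U).
Proof.
move=> S0_in; apply/andP; split; first by apply/set0Pn; exists S0.
apply/forall_inP=> S1; rewrite inE => /and3P [/eqP card1 LS1 S1U].
apply/forall_inP=> S2; rewrite inE => /and3P [/eqP card2 LS2 S2U].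
apply/forall_inP=> x; rewrite inE => /andP [xNS2 xS1].
have /subsetPn [y yS2 yNS1] : ~~ (S2 \subset S1).
  apply: contra xNS2 => S21; suff -> : S2 = S1 by [].
  by apply/eqP; rewrite eqEcard S21 card1 card2 /=.
apply/exists_inP; exists y; first by rewrite inE yNS1.
rewrite inE cardsU1 !inE negb_and negbK yNS1 orbT /=.
rewrite -card1 (cardsD1 x S1) xS1 eqxx /=; apply/andP; split.
  apply: subset_trans (subsetU1 _ _); rewrite subsetD1 LS1.
  by apply: contra xNS2; apply: (subsetP LS2).
by rewrite subUset sub1set (subsetP S2U) // (subset_trans (subD1set _ _) S1U).
Qed.

Lemma interval_bases_tight k (L M U : {set T}) :
  #|M| = k -> L \subset M -> M \subset U -> L = M \/ U = M ->
  interval_bases k L U = [set M].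
Proof.
move=> cardM LM MU LU_M; apply/setP=> S; rewrite !inE.
apply/and3P/eqP => [[/eqP cardS LS SU] | ->]; last by rewrite cardM eqxx.
case: LU_M => [eqL | eqU]; apply/eqP.
  by rewrite eq_sym eqEcard -{1}eqL LS cardS cardM leqnn.
by rewrite eqEcard -{1}eqU SU cardS cardM leqnn.
Qed.

End IntervalBases.

Lemma mem_interval_bases_imset (T T' : finType) (f : T -> T') (g : T' -> T) k
    (L U : {set T'}) (X : {set T}) :
  cancel f g -> cancel g f ->
  (f @: X \in interval_bases k L U) = (X \in interval_bases k (f @^-1: L) (f @^-1: U)).
Proof.
move=> fK gK; rewrite !inE (card_imset _ (can_inj fK)) [f @: X \subset U]sub_imset_pre.
by rewrite (can2_imset_pre X fK gK) -sub_imset_pre (can2_imset_pre L gK fK).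
Qed.

Lemma card_ord_geq n a : #|[set j : 'I_n | a <= j]| = n - a.
Proof.
rewrite -sum1_card (eq_bigl (fun j : 'I_n => a <= j)) => [|j]; last by rewrite inE.
rewrite big_mkcond /= -(big_mkord xpredT (fun j => if a <= j then 1 else 0)).
elim: n => [|n IHn]; first by rewrite big_geq.
by rewrite big_nat_recr //= IHn; case: leqP; lia.
Qed.

Definition form_std (n k m l : nat) : {set {set 'I_n}} :=
  interval_bases k [set j : 'I_n | n - l <= j] [set j : 'I_n | m <= j].

Section FormModel.
Variables n k m l : nat.
Hypothesis ok : form_ok n k m l.

Let blocks_eq : m + (n - l - m) + l = n.
Proof. by case/and3P: ok; lia. Qed.

Definition block_ord (x : ('I_m + 'I_(n - l - m)) + 'I_l) : 'I_n :=
  cast_ord blocks_eq (unsplit (match x with inl u => inl (unsplit u) | inr t => inr t end)).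

Definition block_ord_inv (j : 'I_n) : ('I_m + 'I_(n - l - m)) + 'I_l :=
  match split (cast_ord (esym blocks_eq) j) with inl v => inl (split v) | inr t => inr t end.

Lemma block_ordK : cancel block_ord block_ord_inv.
Proof. by case=> [u|t]; rewrite /block_ord_inv cast_ordK unsplitK ?unsplitK. Qed.

Lemma block_ord_invK : cancel block_ord_inv block_ord.
Proof.
move=> j; rewrite /block_ord_inv -[j in RHS](cast_ordKV blocks_eq).
case: (split _) (splitK (cast_ord (esym blocks_eq) j)) => [v|t] <-;
  by rewrite /block_ord ?splitK.
Qed.

Lemma val_block_ord x : val (block_ord x) =
  match x with inl (inl i) => i : nat | inl (inr j) => m + j | inr t => n - l + t end.
Proof. by case: x => [[i|j]|t] //=; rewrite /block_ord /=; lia. Qed.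

Lemma form_matroidE : form_matroid n k m l =
  interval_bases k (sumset (sumset set0 set0) setT) (sumset (sumset set0 setT) setT).
Proof.
apply/setP=> X; rewrite -[X]sumset_parts -[lpart X]sumset_parts.
move: (lpart (lpart X)) (rpart (lpart X)) (rpart X) => A1 A2 A3.
rewrite /form_matroid !mem_dsum !lpart_sumset !rpart_sumset !inE !subset_sumset !card_sumset.
rewrite !sub0set subsetT subset0 subTset -cards_eq0 eqEcard subsetT cardsT card_ord /=.
have := max_card A3; rewrite card_ord; case/and3P: ok.
move: #|A1| #|A2| #|A3| => a1 a2 a3 le_lk _ _ le_a3l.
by apply/idP/idP; lia.
Qed.

Lemma miso_form_std : miso (form_matroid n k m l) (form_std n k m l).
Proof.
apply/misoP; exists block_ord, block_ord_inv; split=> [||X]; first exact: block_ordK.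
  exact: block_ord_invK.
rewrite form_matroidE (mem_interval_bases_imset _ _ _ _ block_ordK block_ord_invK).
case/and3P: ok => _ le_mln _.
by congr (X \in interval_bases _ _ _); apply/setP=> -[[i|i]|i];
  rewrite !mem_sumset !inE val_block_ord; have := ltn_ord i; lia.
Qed.

Let last_k := [set j : 'I_n | n - k <= j].

Lemma last_k_in_form_std : last_k \in form_std n k m l.
Proof.
case/and3P: ok => le_lk le_mln le_klnm; rewrite inE card_ord_geq; apply/and3P; split.
- by apply/eqP; lia.
- by apply/subsetP=> j; rewrite !inE; lia.
- by apply/subsetP=> j; rewrite !inE; lia.
Qed.

Lemma form_std_matroid : is_matroid (form_std n k m l).
Proof. exact: interval_bases_matroid last_k_in_form_std. Qed.

Lemma form_std_degenerate :
  ~~ ((m < n - k) && (l < k)) -> form_std n k m l = form_std n k (n - k) k.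
Proof.
move=> degenerate; case/and3P: ok => le_lk le_mln le_klnm.
have last_k_tight (m' l' : nat) : l' <= k -> m' <= n - k -> l' = k \/ m' = n - k ->
    form_std n k m' l' = [set last_k].
  move=> le_l'k le_m'nk tight.
  apply: interval_bases_tight; rewrite ?card_ord_geq; try lia.
  - by apply/subsetP=> j; rewrite !inE; lia.
  - by apply/subsetP=> j; rewrite !inE; lia.
  - by case: tight => ->; [left | right].
by rewrite !last_k_tight //; lia.
Qed.

End FormModel.

Section Classes.
Variables (T I : finType) (R : rel T) (S : {set T}) (rep : I -> T).
Hypotheses (R_refl : reflexive R) (R_sym : forall x y, R x y -> R y x)
  (R_trans : forall x y z, R x y -> R y z -> R x z).

Definition class_in (B : T) : {set T} := [set B' in S | R B B'].

Lemma class_in_eq B B' : R B B' -> class_in B = class_in B'.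
Proof.
move=> RBB'; apply/setP=> C; rewrite !inE; case: (C \in S) => //=.
by apply/idP/idP => RC; [apply: R_trans (R_sym RBB') RC | apply: R_trans RBB' RC].
Qed.

Lemma class_in_rel B B' : B' \in S -> class_in B = class_in B' -> R B B'.
Proof. by move=> B'S /setP /(_ B'); rewrite !inE B'S R_refl /= => ->. Qed.

Hypotheses (rep_in : forall i, rep i \in S)
  (rep_cover : forall B, B \in S -> exists i, R B (rep i)).

Lemma classes_rep : [set class_in B | B in S] = [set class_in (rep i) | i : I].
Proof.
apply/setP=> X; apply/imsetP/imsetP => [[B BS ->] | [i _ ->]]; last by exists (rep i).
by have [i /class_in_eq ->] := rep_cover BS; exists i.
Qed.

Lemma class_in_rep_inj :
  (forall i j, R (rep i) (rep j) -> i = j) -> injective (fun i => class_in (rep i)).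
Proof. by move=> rep_inj i j /class_in_rel -/(_ (rep_in j)) /rep_inj. Qed.

End Classes.

Local Open Scope ring_scope.

Local Notation "''x'" := ('X : {poly {poly int}}).
Local Notation "''y'" := ('X%:P : {poly {poly int}}).

Lemma sum_by_card (T : finType) (V : nmodType) (F : nat -> V) :
  \sum_(A : {set T}) F #|A| = \sum_(a < #|T|.+1) F a *+ 'C(#|T|, a).
Proof.
rewrite (partition_big (fun A : {set T} => (inord #|A| : 'I_#|T|.+1)) predT) //=.
apply: eq_bigr => a _; rewrite -card_draws -sumr_const.
have cardA (A : {set T}) : (#|A| < #|T|.+1)%N by rewrite ltnS max_card.
apply: eq_big => A; first by rewrite inE -val_eqE /= inordK.
by move=> /eqP <-; rewrite inordK.
Qed.

Definition unif_tutte_term (r a : nat) : {poly {poly int}} :=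
  ('x - 1) ^+ (r - minn a r) * ('y - 1) ^+ (a - minn a r).

Definition unif_tutte (r s : nat) : {poly {poly int}} :=
  \sum_(0 <= a < s.+1) unif_tutte_term r a *+ 'C(s, a).

Lemma tutte_unif r m : (r <= m)%N -> tutte (unif r m) = unif_tutte r m.
Proof.
move=> le_rm; rewrite /tutte mrank_unif // cardsT card_ord (minn_idPr le_rm).
under eq_bigr => A _ do rewrite mrank_unif //.
by rewrite (sum_by_card _ (unif_tutte_term r)) card_ord /unif_tutte big_mkord.
Qed.

Lemma tutte_dsum (T1 T2 : finType) (B1 : {set {set T1}}) (B2 : {set {set T2}}) :
  B1 != set0 -> B2 != set0 -> tutte (dsum B1 B2) = tutte B1 * tutte B2.
Proof.
move=> B1_neq0 B2_neq0; rewrite /tutte big_distrlr /= pair_bigA /=.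
rewrite (reindex (fun A => sumset A.1 A.2)) /=; last first.
  exists (fun S => (lpart S, rpart S)) => [[A1 A2]|S] _ /=.
    by rewrite lpart_sumset rpart_sumset.
  exact: sumset_parts.
apply: eq_bigr => -[A1 A2] _ /=.
rewrite !mrank_dsum // !lpart_sumset !rpart_sumset card_sumset /lpart /rpart !preimsetT.
have := mrank_le_setT B1 A1; have := mrank_le_setT B2 A2.
have := mrank_le_card B1 A1; have := mrank_le_card B2 A2.
move: (mrank B1 setT) (mrank B2 setT) (mrank B1 A1) (mrank B2 A2) => r1 r2 a1 a2 *.
have -> : (r1 + r2 - (a1 + a2) = (r1 - a1) + (r2 - a2))%N by lia.
have -> : (#|A1| + #|A2| - (a1 + a2) = (#|A1| - a1) + (#|A2| - a2))%N by lia.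
by rewrite !exprD mulrACA.
Qed.

Definition coef2 (p : {poly {poly int}}) (a b : nat) : int := (p`_a)`_b.

Lemma coef2D p q a b : coef2 (p + q) a b = coef2 p a b + coef2 q a b.
Proof. by rewrite /coef2 !coefD. Qed.

Lemma coef2_sum_mulz (I : finType) (F : I -> {poly {poly int}}) (c : I -> int) a b :
  coef2 (\sum_i F i *~ c i) a b = \sum_i coef2 (F i) a b * c i.
Proof. by rewrite /coef2 !coef_sum; apply: eq_bigr => i _; rewrite !coefMrz mulrzz. Qed.

Lemma coef2_monomialM m l p a b :
  coef2 ('y ^+ m * p * 'x ^+ l) a b =
  if (a < l)%N then 0 else if (b < m)%N then 0 else coef2 p (a - l) (b - m).
Proof.
rewrite /coef2 coefMXn; case: ifP => _; first by rewrite coef0.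
by rewrite -polyC_exp coefCM coefXnM.
Qed.

Lemma coef2_yX s a b : coef2 ('y ^+ s) a b = ((a == 0%N) && (b == s))%:R.
Proof.
by rewrite /coef2 -polyC_exp coefC; case: eqP => _; rewrite ?coefXn ?coef0.
Qed.

Lemma coef2_xX r a b : coef2 ('x ^+ r) a b = ((a == r) && (b == 0%N))%:R.
Proof. by rewrite /coef2 coefXn; case: eqP => _; rewrite ?coef1 ?coef0. Qed.

Lemma unif_tutte0 s : unif_tutte 0 s = 'y ^+ s.
Proof.
rewrite -[in RHS](subrK 1 'y) addrC exprDn /unif_tutte big_mkord; apply: eq_bigr => a _.
by rewrite /unif_tutte_term minn0 !subn0 expr0 mul1r expr1n mul1r.
Qed.

Lemma unif_tutte_diag r : unif_tutte r r = 'x ^+ r.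
Proof.
rewrite -[in RHS](subrK 1 'x) exprDn /unif_tutte big_mkord; apply: eq_bigr => a _.
by rewrite /unif_tutte_term (minn_idPl (ltnSE (ltn_ord a))) subnn expr0 mulr1 expr1n mulr1.
Qed.

Lemma unif_tutteS r s : unif_tutte r.+1 s.+1 = unif_tutte r.+1 s + unif_tutte r s.
Proof.
have termS a : unif_tutte_term r.+1 a.+1 = unif_tutte_term r a.
  by rewrite /unif_tutte_term minnSS !subSS.
rewrite /unif_tutte [LHS]big_nat_recl // [X in _ = X + _]big_nat_recl //.
under eq_bigr => a _ do rewrite binS mulrnDr.
rewrite big_split /= [X in _ + (X + _) = _]big_nat_recr //=.
rewrite (@bin_small s s.+1) // mulr0n addr0.
under [X in _ + (_ + X) = _]eq_bigr => a _ do rewrite termS.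
by rewrite !bin0 addrA.
Qed.

Lemma coef2_unif_tutte00 r s : (r <= s.+1)%N -> coef2 (unif_tutte r s.+1) 0 0 = 0.
Proof.
elim: s r => [|s IHs] [|r] le_rs; rewrite ?unif_tutte0 ?coef2_yX //.
  by case: r le_rs => // _; rewrite unif_tutte_diag coef2_xX.
case: (ltngtP r s.+1) => [lt_rs | | ->]; [|lia|by rewrite unif_tutte_diag coef2_xX].
by rewrite unif_tutteS coef2D !IHs // ltnW.
Qed.

Lemma coef2_unif_tutte10 r s : (r <= s)%N -> coef2 (unif_tutte r.+1 s.+1) 1 0 = 'C(s.-1, r)%:R.
Proof.
elim: s r => [|s IHs] r le_rs.
  by move: le_rs; rewrite leqn0 => /eqP ->; rewrite unif_tutte_diag coef2_xX.
case: (ltngtP r s.+1) => [lt_rs | | ->]; [|lia|by rewrite unif_tutte_diag coef2_xX bin_small].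
rewrite unif_tutteS coef2D IHs //.
case: r lt_rs {le_rs} => [|r] lt_rs; first by rewrite unif_tutte0 coef2_yX !bin0 addr0.
by case: s IHs lt_rs => // s IHs lt_rs; rewrite IHs 1?ltnW // binS natrD.
Qed.

Lemma triangular_sol_eq0 (R : idomainType) (I : finType) (mu : I -> nat)
    (M : I -> I -> R) (c : I -> R) :
  (forall i, M i i != 0) ->
  (forall i j, j != i -> (mu i <= mu j)%N -> M i j = 0) ->
  (forall i, \sum_j M i j * c j = 0) -> forall i, c i = 0.
Proof.
move=> Mii_neq0 Mij_eq0 sol.
suff ltN N i : (mu i < N)%N -> c i = 0 by move=> i; apply: (ltN (mu i).+1).
elim: N i => // N IHN i lt_iN; apply/eqP.
have := sol i; rewrite (bigD1 i) //= big1 ?addr0 => [/eqP|j ji].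
  by rewrite mulf_eq0 (negbTE (Mii_neq0 i)).
case: (ltnP (mu j) (mu i)) => [lt_ji | le_ij]; last by rewrite Mij_eq0 ?mul0r.
by rewrite IHN ?mulr0 //; apply: leq_trans lt_ji _.
Qed.

Section FormTutte.
Variables n k : nat.

Definition form_tutte (m l : nat) : {poly {poly int}} :=
  'y ^+ m * unif_tutte (k - l)%N (n - l - m)%N * 'x ^+ l.

Lemma tutte_form_matroid m l :
  form_ok n k m l -> tutte (form_matroid n k m l) = form_tutte m l.
Proof.
case/and3P=> le_lk le_mln le_klnm.
have unif_neq0 r s : (r <= s)%N -> unif r s != set0.
  by move=> le_rs; rewrite -card_gt0 card_draws card_ord bin_gt0.
rewrite !tutte_dsum ?dsum_neq0 ?unif_neq0 // !tutte_unif //.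
by rewrite unif_tutte0 unif_tutte_diag.
Qed.

(* Some (m, l) stands for the pair (m, l); None for the degenerate pairs, which are all
   isomorphic (form_std_degenerate). *)
Definition form_index : finType := option ('I_(n - k) * 'I_k)%type.

Definition index_m (i : form_index) : nat := if i is Some p then p.1 else (n - k)%N.
Definition index_l (i : form_index) : nat := if i is Some p then p.2 else k.

Definition index_tutte (i : form_index) := form_tutte (index_m i) (index_l i).

(* The exponents (of x, of y) of the monomial isolating index_tutte i. *)
Definition pivot (i : form_index) : nat * nat :=
  if i is Some p then (p.2.+1, val p.1) else (k, n - k)%N.

Definition index_rank (i : form_index) : nat :=
  if i is Some p then (p.1 * k + p.2)%N else ((n - k) * k)%N.

Lemma coef2_pivot i : coef2 (index_tutte i) (pivot i).1 (pivot i).2 != 0.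
Proof.
case: i => [[a b]|]; rewrite /index_tutte coef2_monomialM /= ?ltnn ?subnn; last first.
  by rewrite unif_tutte0 coef2_yX.
rewrite ltnNge leqnSn /= subSn // subnn.
have [a_lt b_lt] := (ltn_ord a, ltn_ord b).
have -> : (n - b - a = (n - b - a).-1.+1)%N by lia.
have -> : (k - b = (k - b).-1.+1)%N by lia.
by rewrite coef2_unif_tutte10 ?pnatr_eq0 -?lt0n ?bin_gt0; lia.
Qed.

Lemma coef2_pivot_eq0 i j : j != i -> (index_rank i <= index_rank j)%N ->
  coef2 (index_tutte j) (pivot i).1 (pivot i).2 = 0.
Proof.
case: i j => [[a b]|] [[a' b']|] //= ji;
  rewrite /index_rank /index_tutte coef2_monomialM /= => le_ij.
- have k_gt0 : (0 < k)%N by apply: leq_ltn_trans (ltn_ord b).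
  have := leq_div2r k le_ij; rewrite !divnMDl // !divn_small // !addn0 => le_aa'.
  case: (ltnP b.+1 b') => // le_b'b; case: (ltnP a a') => // le_a'a.
  have ea : a' = a by apply/val_inj/eqP; rewrite eqn_leq le_a'a.
  have eb : b' = b.+1 :> nat.
    have : b' != b by apply: contraNneq ji => ->; rewrite ea.
    by move: le_ij; rewrite ea leq_add2l -val_eqE /=; lia.
  rewrite ea eb !subnn.
  have [a_lt b_lt] := (ltn_ord a, ltn_ord b).
  have -> : (n - b.+1 - a = (n - b.+1 - a).-1.+1)%N by lia.
  by rewrite coef2_unif_tutte00 //; lia.
- by rewrite ltn_ord if_same.
- have k_gt0 : (0 < k)%N by apply: leq_ltn_trans (ltn_ord b').
  have := leq_div2r k le_ij.
  by rewrite mulnK // divnMDl // divn_small // addn0 leqNgt ltn_ord.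
Qed.

Lemma index_tutte_free (c : form_index -> int) :
  \sum_i index_tutte i *~ c i = 0 -> forall i, c i = 0.
Proof.
move=> sum0; apply: (@triangular_sol_eq0 _ _ index_rank
  (fun i j => coef2 (index_tutte j) (pivot i).1 (pivot i).2)).
- exact: coef2_pivot.
- exact: coef2_pivot_eq0.
- by move=> i; rewrite -coef2_sum_mulz sum0 /coef2 !coef0.
Qed.

Lemma index_tutte_inj : injective index_tutte.
Proof.
move=> i j eqT; case: (eqVneq i j) => // neq_ij.
have sum_delta i0 : \sum_x index_tutte x *~ (x == i0)%:Z = index_tutte i0.
  by rewrite (bigD1 i0) //= eqxx big1 ?addr0 // => x /negbTE ->.
have := index_tutte_free (c := fun x => (x == i)%:Z - (x == j)%:Z).
under eq_bigr => x _ do rewrite mulrzBr.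
rewrite sumrB !sum_delta eqT subrr => /(_ erefl i).
by rewrite eqxx (negbTE neq_ij).
Qed.

End FormTutte.

Section Representatives.
Variables n k : nat.
Hypothesis le_kn : (k <= n)%N.

Definition form_rep (i : form_index n k) : {set {set 'I_n}} :=
  form_std n k (index_m i) (index_l i).

Lemma index_form_ok (i : form_index n k) : form_ok n k (index_m i) (index_l i).
Proof.
case: i => [[a b]|] /=; apply/and3P; split; try lia.
all: by have := ltn_ord a; have := ltn_ord b; lia.
Qed.

Lemma form_rep_in (i : form_index n k) : form_rep i \in form_set n k.
Proof.
have ok := index_form_ok i.
rewrite inE form_std_matroid //=.
have [lt_m lt_l] : (index_m i < n.+1)%N /\ (index_l i < n.+1)%N by case/and3P: ok; lia.
apply/existsP; exists (Ordinal lt_m); apply/existsP; exists (Ordinal lt_l).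
by rewrite ok miso_sym ?miso_form_std.
Qed.

Lemma tutte_form_rep (i : form_index n k) : tutte (form_rep i) = index_tutte i.
Proof.
have ok := index_form_ok i.
by rewrite -(tutte_miso (miso_form_std ok)) tutte_form_matroid.
Qed.

Lemma form_set_cover B : B \in form_set n k -> exists i, miso B (form_rep i).
Proof.
rewrite inE => /andP [_ /existsP [m /existsP [l /andP [ok isoB]]]].
have {}isoB := miso_trans isoB (miso_form_std ok).
case: (boolP ((m < n - k) && (l < k))%N) => [/andP [lt_m lt_l] | degenerate].
  by exists (Some (Ordinal lt_m, Ordinal lt_l)).
by exists None; rewrite /form_rep /= -(form_std_degenerate ok degenerate).
Qed.

Lemma form_rep_inj (i j : form_index n k) : miso (form_rep i) (form_rep j) -> i = j.
Proof. by move=> /tutte_miso; rewrite !tutte_form_rep => /index_tutte_inj. Qed.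

End Representatives.

Unset Implicit Arguments.

Theorem proposition4p10 (n k : nat) (hk : (k <= n)%N) :
  #|form_classes n k| = (k * (n - k) + 1)%N /\
  forall (rep : {set {set {set 'I_n}}} -> {set {set 'I_n}})
         (c : {set {set {set 'I_n}}} -> int),
    (forall X, X \in form_classes n k -> rep X \in X) ->
    \sum_(X in form_classes n k) tutte (rep X) *~ c X = 0 ->
    forall X, X \in form_classes n k -> c X = 0.
Proof.
pose iso := fun B B' : {set {set 'I_n}} => miso B B'.
pose cls (i : form_index n k) := class_in iso (form_set n k) (form_rep i).
have classesE : form_classes n k = [set cls i | i : form_index n k].
  apply: classes_rep => [B B' | B B' B'' | i | B]; first exact: miso_sym.
  - exact: miso_trans.
  - exact: form_rep_in.
  - exact: form_set_cover.
have cls_inj : injective cls.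
  apply: class_in_rep_inj => [B | i |]; first exact: miso_refl.
  - exact: form_rep_in.
  - exact: form_rep_inj.
split; first by rewrite classesE card_imset // card_option card_prod !card_ord mulnC addn1.
move=> rep c rep_in sum0 X; rewrite classesE => /imsetP [i _ ->].
apply: (index_tutte_free (c := c \o cls)).
rewrite -[RHS]sum0 classesE (big_imset _ (in2W cls_inj)) /=.
apply: eq_bigr => j _; have /rep_in : cls j \in form_classes n k by rewrite classesE imset_f.
by rewrite inE => /andP [_ /tutte_miso <-]; rewrite tutte_form_rep.
Qed.
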